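(* Let $T_{p,q}(x)=\dfrac{U_p\left(\frac{\sin x}{x}\right)}{U_q(\cos x)}$ for $x\in(0,\pi/2)$ and $p,q\in\mathbb{R}$. Then (i) when $q>1$, $T_{p,q}$ is increasing on $(0,\pi/2)$ for $p\le3q-\frac85$; (ii) when $q=1$, $T_{p,q}$ is increasing on $(0,\pi/2)$ for $p\le\frac75$ and decreasing on $(0,\pi/2)$ for $p\ge\frac{\pi^2}{4}-1$; (iii) when $\frac{34}{35}<q<1$, $T_{p,q}$ is decreasing on $(0,\pi/2)$ for $p\ge\frac{\pi^2}{4}-1$; (iv) when $q\le\frac{34}{35}$, $T_{p,q}$ is decreasing on $(0,\pi/2)$ for $p\ge3q-\frac85$.
   Context: For $t\in(0,1)$: $U_p(t)=\frac{1-t^p}{p}$ if $p\ne0$ and $U_0(t)=-\ln t$. *)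

From Stdlib Require Import Reals.
Open Scope R_scope.

Definition U (p t : R) : R :=
  if Req_EM_T p 0 then - ln t else (1 - Rpower t p) / p.

Definition T (p q x : R) : R := U p (sin x / x) / U q (cos x).

Definition increasing_on_0_pi2 (f : R -> R) : Prop :=
  forall x y, 0 < x -> x < y -> y < PI / 2 -> f x < f y.
Definition decreasing_on_0_pi2 (f : R -> R) : Prop :=
  forall x y, 0 < x -> x < y -> y < PI / 2 -> f y < f x.

(* Write [T p q = num p / den q] with [num p t = U p (sin t / t)] and
   [den q t = U q (cos t)], both vanishing at [0+]. By the monotone form of
   l'Hopital's rule, [T p q] is monotone as soon as the ratio [num' / den'] is,
   and the derivative of that ratio has the sign of the trigonometric expression
   [Lam p q t], which is affine in [p] and [q]. Each regime therefore reduces to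
   the sign of [Lam] at one extreme parameter pair, [(7/5, 1)], [(PI^2/4 - 1, 1)]
   or [(46/35, 34/35)], together with [3 cos t (sin t - t cos t) < t sin t ^ 2].
   These finitely many inequalities on [(0, PI/2)] are proved by replacing
   [sin] and [cos] at [t], [2t], [3t] by alternating Taylor bounds and certifying
   the sign of the resulting polynomial in [t ^ 2] by interval Horner evaluation
   over rationals; near [PI/2] one expands instead in [PI/2 - t]. *)

From Stdlib Require Import Reals Lra Lia Psatz QArith Qreals List.
From Coquelicot Require Import Coquelicot.
Import ListNotations.
Open Scope R_scope.

Lemma continuity_pt_of_is_derive (f : R -> R) (x l : R) :
  is_derive f x l -> continuity_pt f x.
Proof.
  intros Hf. apply continuity_pt_filterlim.
  apply (@ex_derive_continuous R_AbsRing R_NormedModule). now exists l.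
Qed.

Lemma nonneg_of_deriv_nonneg (f df : R -> R) :
  f 0 = 0 ->
  (forall t, 0 <= t -> is_derive f t (df t)) ->
  (forall t, 0 <= t -> 0 <= df t) ->
  forall x, 0 <= x -> 0 <= f x.
Proof.
  intros Hf0 Hf Hdf x Hx.
  destruct (Req_dec x 0) as [->|Hx0]; [lra|].
  destruct (MVT_cor2 f df 0 x) as [c [Hc Hcx]]; [lra| |].
  - intros c Hc. apply is_derive_Reals, Hf. lra.
  - assert (0 <= df c) by (apply Hdf; lra). nra.
Qed.

Definition small_near_0 (f : R -> R) : Prop :=
  forall eps delta, 0 < eps -> 0 < delta -> exists t, 0 < t < delta /\ f t < eps.

(* Monotone l'Hopital rule: [(f / g)' = g' (r g - f) / g ^ 2], and [r g - f] is
   increasing, hence positive because [f] takes arbitrarily small values near [0+]. *)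
Lemma ratio_increasing (b : R) (f g df dg r : R -> R) :
  (forall t, 0 < t < b -> is_derive f t (df t)) ->
  (forall t, 0 < t < b -> is_derive g t (dg t)) ->
  (forall t, 0 < t < b -> 0 < dg t) ->
  (forall t, 0 < t < b -> 0 < g t) ->
  (forall t, 0 < t < b -> df t = r t * dg t) ->
  (forall t, 0 < t < b -> 0 < r t) ->
  (forall x y, 0 < x -> x < y -> y < b -> r x < r y) ->
  small_near_0 f ->
  forall x y, 0 < x -> x < y -> y < b -> f x / g x < f y / g y.
Proof.
  intros Hf Hg Hdg Hgpos Hdf Hrpos Hr Hf0.
  (* On [[x, y]], [r y * g - f] has derivative [(r y - r t) * g' t >= 0]. *)
  assert (Hcauchy : forall x y, 0 < x -> x < y -> y < b -> f y - f x <= r y * (g y - g x)).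
  { intros x y Hx Hxy Hy.
    destruct (MVT_cor2 (fun t => r y * g t - f t) (fun t => r y * dg t - df t) x y)
      as [c [Hc Hcxy]]; [lra| |].
    - intros c Hc. apply is_derive_Reals.
      apply (@is_derive_minus R_AbsRing R_NormedModule);
        [apply is_derive_scal, Hg | apply Hf]; lra.
    - rewrite Hdf in Hc by lra.
      assert (0 < (r y - r c) * dg c)
        by (apply Rmult_lt_0_compat; [apply Rlt_0_minus, Hr | apply Hdg]; lra).
      nra. }
  set (gap := fun t => r t * g t - f t).
  assert (Hincr : forall x y, 0 < x -> x < y -> y < b -> gap x < gap y).
  { intros x y Hx Hxy Hy. unfold gap.
    pose proof (Hcauchy x y Hx Hxy Hy). pose proof (Hr x y Hx Hxy Hy).
    pose proof (Hgpos x ltac:(lra)). nra. }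
  assert (Hpos : forall t, 0 < t < b -> 0 < gap t).
  { intros t Ht.
    assert (0 <= gap (t / 2)).
    { destruct (Rle_or_lt 0 (gap (t / 2))) as [|Hneg]; [assumption|].
      destruct (Hf0 (- gap (t / 2)) (t / 2)) as [e [He Hfe]]; [lra|lra|].
      pose proof (Hincr e (t / 2) ltac:(lra) ltac:(lra) ltac:(lra)).
      pose proof (Rmult_lt_0_compat _ _ (Hrpos e ltac:(lra)) (Hgpos e ltac:(lra))).
      unfold gap in *. lra. }
    pose proof (Hincr (t / 2) t ltac:(lra) ltac:(lra) ltac:(lra)). lra. }
  apply (incr_function (fun t => f t / g t) 0 b (fun t => dg t * gap t / g t ^ 2));
    intros t Ht0 Htb; simpl in Ht0, Htb.
  - replace (dg t * gap t / g t ^ 2) with ((df t * g t - f t * dg t) / g t ^ 2).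
    + apply is_derive_div; [apply Hf | apply Hg | apply Rgt_not_eq, Hgpos]; lra.
    + unfold gap. rewrite Hdf by lra. field. apply Rgt_not_eq, Hgpos. lra.
  - apply Rdiv_lt_0_compat;
      [apply Rmult_lt_0_compat; [apply Hdg | apply Hpos] | apply pow_lt, Hgpos]; lra.
Qed.

(* [cos_coef k = (-1)^k / (2k)!], computed by a recursion that [cbn] turns into
   rational literals. *)
Fixpoint cos_coef (k : nat) : R :=
  match k with
  | O => 1
  | S k' => - cos_coef k' / ((2 * INR k' + 1) * (2 * INR k' + 2))
  end.

Definition sin_coef (k : nat) : R := cos_coef k / (2 * INR k + 1).

Fixpoint sin_taylor (n : nat) (x : R) : R :=
  match n with
  | O => 0
  | S n' => sin_taylor n' x + sin_coef n' * x ^ (2 * n' + 1)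
  end.

Fixpoint cos_taylor (n : nat) (x : R) : R :=
  match n with
  | O => 0
  | S n' => cos_taylor n' x + cos_coef n' * x ^ (2 * n')
  end.

Lemma is_derive_monomial (c : R) (m : nat) (x : R) :
  is_derive (fun t => c * t ^ m) x (c * (INR m * x ^ pred m)).
Proof.
  apply is_derive_scal.
  pose proof (is_derive_pow (fun t => t) m x 1 (@is_derive_id R_AbsRing x)) as H.
  simpl in H. now rewrite Rmult_1_r in H.
Qed.

Lemma is_derive_sin_taylor (n : nat) (x : R) :
  is_derive (sin_taylor n) x (cos_taylor n x).
Proof.
  induction n as [|n IH].
  - apply (@is_derive_const R_AbsRing R_NormedModule).
  - change (sin_taylor (S n)) with (fun t => sin_taylor n t + sin_coef n * t ^ (2 * n + 1)).
    change (cos_taylor (S n) x) with (cos_taylor n x + cos_coef n * x ^ (2 * n)).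
    replace (cos_taylor n x + cos_coef n * x ^ (2 * n))
      with (cos_taylor n x + sin_coef n * (INR (2 * n + 1) * x ^ pred (2 * n + 1))).
    + apply (@is_derive_plus R_AbsRing R_NormedModule); [exact IH | apply is_derive_monomial].
    + replace (pred (2 * n + 1)) with (2 * n)%nat by lia.
      unfold sin_coef. rewrite plus_INR, mult_INR. simpl (INR 2). simpl (INR 1).
      field. pose proof (pos_INR n). lra.
Qed.

Lemma is_derive_cos_taylor (n : nat) (x : R) :
  is_derive (cos_taylor (S n)) x (- sin_taylor n x).
Proof.
  induction n as [|n IH].
  - simpl. eapply is_derive_ext; [intros; reflexivity|].
    replace (- 0) with (@zero R_AbsRing) by (unfold zero; simpl; ring).
    apply (@is_derive_const R_AbsRing R_NormedModule).
  - change (cos_taylor (S (S n)))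
      with (fun t => cos_taylor (S n) t + cos_coef (S n) * t ^ (2 * S n)).
    replace (- sin_taylor (S n) x)
      with (- sin_taylor n x + cos_coef (S n) * (INR (2 * S n) * x ^ pred (2 * S n))).
    + apply (@is_derive_plus R_AbsRing R_NormedModule); [exact IH | apply is_derive_monomial].
    + replace (pred (2 * S n)) with (2 * n + 1)%nat by lia.
      cbn [sin_taylor cos_coef]. unfold sin_coef.
      rewrite mult_INR, (S_INR n). change (INR 2) with 2.
      field. pose proof (pos_INR n). lra.
Qed.

Lemma sin_taylor_at_0 (n : nat) : sin_taylor n 0 = 0.
Proof. induction n as [|n IH]; simpl; [reflexivity|]. rewrite IH, pow_i by lia. ring. Qed.

Lemma cos_taylor_at_0 (n : nat) : cos_taylor (S n) 0 = 1.
Proof. induction n as [|n IH]; simpl in *; [ring|]. rewrite IH, pow_i by lia. ring. Qed.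

Lemma sin_taylor_error_sign (n : nat) :
  (forall x, 0 <= x -> 0 <= (-1) ^ n * (cos x - cos_taylor n x)) ->
  forall x, 0 <= x -> 0 <= (-1) ^ n * (sin x - sin_taylor n x).
Proof.
  intros Hcos.
  apply (nonneg_of_deriv_nonneg _ (fun x => (-1) ^ n * (cos x - cos_taylor n x)));
    [|intros t _|exact Hcos].
  - rewrite sin_0, sin_taylor_at_0. ring.
  - apply is_derive_scal, (@is_derive_minus R_AbsRing R_NormedModule);
      [apply is_derive_sin | apply is_derive_sin_taylor].
Qed.

Lemma cos_taylor_error_sign (n : nat) :
  (forall x, 0 <= x -> 0 <= (-1) ^ n * (sin x - sin_taylor n x)) ->
  forall x, 0 <= x -> 0 <= (-1) ^ S n * (cos x - cos_taylor (S n) x).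
Proof.
  intros Hsin.
  apply (nonneg_of_deriv_nonneg _ (fun x => (-1) ^ n * (sin x - sin_taylor n x)));
    [|intros t _|exact Hsin].
  - rewrite cos_0, cos_taylor_at_0. ring.
  - eapply is_derive_ext; [intros; reflexivity|].
    replace ((-1) ^ n * (sin t - sin_taylor n t))
      with ((-1) ^ S n * (- sin t - - sin_taylor n t)) by (simpl; ring).
    apply is_derive_scal, (@is_derive_minus R_AbsRing R_NormedModule);
      [apply is_derive_cos | apply is_derive_cos_taylor].
Qed.

Lemma taylor_alternating (n : nat) (x : R) : (1 <= n)%nat -> 0 <= x ->
  0 <= (-1) ^ n * (cos x - cos_taylor n x) /\ 0 <= (-1) ^ n * (sin x - sin_taylor n x).
Proof.
  intros Hn. revert x.
  enough (Hcos : forall x, 0 <= x -> 0 <= (-1) ^ n * (cos x - cos_taylor n x)).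
  { intros x Hx. split; [apply Hcos | apply sin_taylor_error_sign]; assumption. }
  induction n as [|n IH]; [lia|].
  destruct (Nat.eq_dec n 0) as [->|Hn0].
  - intros x _. simpl. pose proof (COS_bound x). lra.
  - apply cos_taylor_error_sign, sin_taylor_error_sign, IH. lia.
Qed.

Lemma sin_taylor_even_le (k : nat) (x : R) : 0 <= x -> sin_taylor (2 * S k) x <= sin x.
Proof.
  intros Hx. destruct (taylor_alternating (2 * S k) x ltac:(lia) Hx) as [_ H].
  rewrite pow_1_even in H. lra.
Qed.

Lemma cos_taylor_even_le (k : nat) (x : R) : 0 <= x -> cos_taylor (2 * S k) x <= cos x.
Proof.
  intros Hx. destruct (taylor_alternating (2 * S k) x ltac:(lia) Hx) as [H _].
  rewrite pow_1_even in H. lra.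
Qed.

Lemma sin_le_taylor_odd (k : nat) (x : R) : 0 <= x -> sin x <= sin_taylor (S (2 * k)) x.
Proof.
  intros Hx. destruct (taylor_alternating (S (2 * k)) x ltac:(lia) Hx) as [_ H].
  rewrite pow_1_odd in H. lra.
Qed.

Lemma cos_le_taylor_odd (k : nat) (x : R) : 0 <= x -> cos x <= cos_taylor (S (2 * k)) x.
Proof.
  intros Hx. destruct (taylor_alternating (S (2 * k)) x ltac:(lia) Hx) as [H _].
  rewrite pow_1_odd in H. lra.
Qed.

Ltac taylor_simpl :=
  cbn [sin_taylor cos_taylor Nat.mul Nat.add]; unfold sin_coef; cbn [cos_coef];
  rewrite ?INR_IZR_INZ; cbn [Z.of_nat Pos.of_succ_nat Pos.succ].

Tactic Notation "taylor_simpl" "in" hyp(H) := revert H; taylor_simpl; intros H.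

Fixpoint horner (l : list Q) (z : R) : R :=
  match l with
  | [] => 0
  | a :: l' => Q2R a + z * horner l' z
  end.

Fixpoint horner_ub (l : list Q) (z0 z1 : Q) : Q :=
  match l with
  | [] => 0%Q
  | a :: l' =>
      let h := horner_ub l' z0 z1 in
      if Qle_bool 0 h then Qred (a + z1 * h) else Qred (a + z0 * h)
  end.

Lemma Q2R_Qle_bool (a b : Q) : Qle_bool a b = true <-> Q2R a <= Q2R b.
Proof. rewrite Qle_bool_iff. split; [apply Qle_Rle | apply Rle_Qle]. Qed.

Lemma Q2R_Qle_bool_false (a b : Q) : Qle_bool a b = false -> Q2R b < Q2R a.
Proof. intros Hab. apply Rnot_le_lt. rewrite <- Q2R_Qle_bool, Hab. discriminate. Qed.

Lemma horner_le_ub (l : list Q) (z0 z1 : Q) (z : R) :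
  0 <= Q2R z0 -> Q2R z0 <= z <= Q2R z1 -> horner l z <= Q2R (horner_ub l z0 z1).
Proof.
  intros Hz0 Hz. induction l as [|a l IH]; cbn [horner horner_ub].
  - rewrite RMicromega.Q2R_0. lra.
  - destruct (Qle_bool 0 (horner_ub l z0 z1)) eqn:Hsign;
      rewrite Qred_correct, Q2R_plus, Q2R_mult; apply Rplus_le_compat_l.
    + apply Q2R_Qle_bool in Hsign. rewrite RMicromega.Q2R_0 in Hsign.
      apply Rle_trans with (z * Q2R (horner_ub l z0 z1)); [apply Rmult_le_compat_l|]; nra.
    + apply Q2R_Qle_bool_false in Hsign. rewrite RMicromega.Q2R_0 in Hsign.
      apply Rle_trans with (z * Q2R (horner_ub l z0 z1)); [apply Rmult_le_compat_l|]; nra.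
Qed.

Lemma horner_neg_of_ub (l : list Q) (a b : Q) (z : R) :
  0 <= Q2R a -> negb (Qle_bool 0 (horner_ub l a b)) = true -> Q2R a <= z <= Q2R b ->
  horner l z < 0.
Proof.
  intros Ha Hub Hz. apply negb_true_iff, Q2R_Qle_bool_false in Hub.
  rewrite RMicromega.Q2R_0 in Hub.
  pose proof (horner_le_ub l a b z Ha Hz). lra.
Qed.

Fixpoint horner_neg_check (l : list Q) (a step : Q) (n : nat) : bool :=
  negb (Qle_bool 0 (horner_ub l a (a + step))) &&
  match n with
  | O => true
  | S n' => horner_neg_check l (Qred (a + step)) step n'
  end.

Lemma horner_neg_check_sound (l : list Q) (n : nat) (a step : Q) (z : R) :
  0 <= Q2R a -> 0 <= Q2R step -> horner_neg_check l a step n = true ->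
  Q2R a <= z <= Q2R a + (INR n + 1) * Q2R step -> horner l z < 0.
Proof.
  revert a. induction n as [|n IH]; intros a Ha Hstep Hcheck Hz;
    apply andb_prop in Hcheck as [Hpiece Hrest].
  - apply (horner_neg_of_ub l a (a + step)); [assumption..|].
    rewrite Q2R_plus. simpl in Hz. lra.
  - destruct (Rle_or_lt z (Q2R a + Q2R step)).
    + apply (horner_neg_of_ub l a (a + step)); [assumption..|]. rewrite Q2R_plus. lra.
    + apply (IH (Qred (a + step))); rewrite ?Qred_correct, ?Q2R_plus; try assumption; try lra.
      rewrite S_INR in Hz. lra.
Qed.

Lemma pow_mul_horner_neg (l : list Q) (k n : nat) (step : Q) (x : R) :
  0 < x -> 0 <= Q2R step -> x ^ 2 <= (INR n + 1) * Q2R step ->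
  horner_neg_check l 0 step n = true -> x ^ k * horner l (x ^ 2) < 0.
Proof.
  intros Hx Hstep Hx2 Hcheck.
  assert (horner l (x ^ 2) < 0).
  { apply (horner_neg_check_sound l n 0 step); rewrite ?RMicromega.Q2R_0; try lra; auto.
    split; [apply pow2_ge_0 | lra]. }
  pose proof (pow_lt x k Hx). nra.
Qed.

Lemma PI2_lt : PI / 2 < 15708 / 10000.
Proof.
  pose proof (cos_le_taylor_odd 4 (15708 / 10000) ltac:(lra)) as Hcos. taylor_simpl in Hcos.
  destruct (Rlt_or_le (PI / 2) (15708 / 10000)) as [|Hle]; [assumption|].
  assert (0 <= cos (15708 / 10000)) by (apply cos_ge_0; pose proof PI2_RGT_0; lra).
  lra.
Qed.

Lemma PI2_gt : 157075 / 100000 < PI / 2.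
Proof.
  pose proof (cos_taylor_even_le 3 (157075 / 100000) ltac:(lra)) as Hcos. taylor_simpl in Hcos.
  apply PI2_lower_bound; lra.
Qed.

Lemma sin_cos_bounds (t : R) : 0 < t < PI / 2 ->
  0 < sin t /\ 0 < cos t /\ sin t < t /\ cos t < 1 /\ t * cos t < sin t /\ t ^ 2 <= 987 / 400.
Proof.
  intros Ht. pose proof PI2_lt.
  assert (Hsin : 0 < sin t) by (apply sin_gt_0; lra).
  assert (Hcos : 0 < cos t) by (apply cos_gt_0; lra).
  pose proof (sin_le_taylor_odd 1 t ltac:(lra)) as Hsin3.
  pose proof (cos_le_taylor_odd 1 t ltac:(lra)) as Hcos4.
  pose proof (sin_taylor_even_le 0 t ltac:(lra)) as Hsin1.
  taylor_simpl in Hsin3. taylor_simpl in Hcos4. taylor_simpl in Hsin1.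
  assert (t ^ 2 < 25 / 10) by nra.
  assert (t * cos t <= t * (1 - t ^ 2 / 2 + t ^ 4 / 24)) by (apply Rmult_le_compat_l; lra).
  assert (0 < t ^ 3) by (apply pow_lt; lra).
  assert (t ^ 5 = t ^ 3 * t ^ 2 /\ t * t ^ 4 = t ^ 3 * t ^ 2) by (split; ring).
  repeat split; try lra; nra.
Qed.

Lemma Rpower_pos (x y : R) : 0 < Rpower x y.
Proof. apply exp_pos. Qed.

Lemma U_at_1 (p : R) : U p 1 = 0.
Proof.
  unfold U, Rpower. rewrite ln_1, Rmult_0_r, exp_0.
  destruct (Req_EM_T p 0); [ring | field; assumption].
Qed.

Lemma is_derive_U (p t : R) : 0 < t -> is_derive (U p) t (- Rpower t (p - 1)).
Proof.
  intros Ht. unfold U, Rpower.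
  replace ((p - 1) * ln t) with (p * ln t + - ln t) by ring.
  rewrite exp_plus, exp_Ropp, exp_ln by assumption.
  destruct (Req_EM_T p 0) as [->|Hp].
  - rewrite Rmult_0_l, exp_0.
    apply (is_derive_ext (fun t => - ln t)); [reflexivity|].
    auto_derive; [assumption|]. field. lra.
  - apply (is_derive_ext (fun t => (1 - exp (p * ln t)) / p)); [reflexivity|].
    auto_derive; [assumption|]. field. lra.
Qed.

Lemma U_pos (p t : R) : 0 < t < 1 -> 0 < U p t.
Proof.
  intros Ht. assert (Hln : ln t < 0) by (rewrite <- ln_1; apply ln_increasing; lra).
  unfold U, Rpower. destruct (Req_EM_T p 0) as [|Hp]; [lra|].
  destruct (Rlt_or_le 0 p) as [Hp0|Hp0].
  - assert (exp (p * ln t) < 1) by (rewrite <- exp_0; apply exp_increasing; nra).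
    apply Rdiv_lt_0_compat; lra.
  - assert (1 < exp (p * ln t)) by (rewrite <- exp_0; apply exp_increasing; nra).
    replace ((1 - exp (p * ln t)) / p) with ((exp (p * ln t) - 1) / - p) by (field; lra).
    apply Rdiv_lt_0_compat; lra.
Qed.

Lemma small_near_0_U_comp (p : R) (h : R -> R) :
  (forall t, 0 < t < 1 -> 1 - t <= h t < 1) -> small_near_0 (fun t => U p (h t)).
Proof.
  intros Hh eps delta Heps Hdelta.
  destruct (continuity_pt_of_is_derive _ _ _ (is_derive_U p 1 Rlt_0_1) eps Heps)
    as [a [Ha HUa]].
  set (t := Rmin (delta / 2) (Rmin (1 / 2) (a / 2))).
  assert (t <= delta / 2) by apply Rmin_l.
  assert (t <= 1 / 2 /\ t <= a / 2) as []
    by (split; eapply Rle_trans; [apply Rmin_r|apply Rmin_l|apply Rmin_r|apply Rmin_r]).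
  assert (0 < t) by (repeat apply Rmin_pos; lra).
  exists t. split; [lra|].
  pose proof (Hh t ltac:(lra)).
  specialize (HUa (h t)). simpl in HUa. unfold R_dist, D_x, no_cond in HUa.
  rewrite U_at_1, Rminus_0_r in HUa.
  assert (HU : Rabs (U p (h t)) < eps)
    by (apply HUa; split; [split; [trivial|lra] | rewrite Rabs_left; lra]).
  apply Rabs_def2 in HU. lra.
Qed.

Definition num (p t : R) : R := U p (sin t / t).
Definition den (q t : R) : R := U q (cos t).

Definition num_deriv (p t : R) : R := (t * cos t - sin t) / t ^ 2 * - Rpower (sin t / t) (p - 1).
Definition den_deriv (q t : R) : R := - sin t * - Rpower (cos t) (q - 1).

Definition deriv_ratio (p q t : R) : R :=
  Rpower (sin t / t) (p - 1) / Rpower (cos t) (q - 1) * (sin t - t * cos t) / (t ^ 2 * sin t).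

Definition Lam (p q t : R) : R :=
  let S := sin t in let C := cos t in let D := S - t * C in
  - p * C * D ^ 2 + (q - 1) * t * S ^ 2 * D + t ^ 2 * S ^ 2 * C - S * C * D - 2 * t * C ^ 2 * D.

Lemma is_derive_num (p t : R) : 0 < t < PI / 2 ->
  is_derive (num p) t (num_deriv p t).
Proof.
  intros Ht. unfold num_deriv. destruct (sin_cos_bounds t Ht) as (Hs & _).
  apply (is_derive_comp (U p) (fun t => sin t / t)).
  - apply is_derive_U, Rdiv_lt_0_compat; lra.
  - auto_derive; [lra|]. field. lra.
Qed.

Lemma is_derive_den (q t : R) : 0 < t < PI / 2 ->
  is_derive (den q) t (den_deriv q t).
Proof.
  intros Ht. unfold den_deriv. destruct (sin_cos_bounds t Ht) as (_ & Hc & _).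
  apply (is_derive_comp (U q) cos); [apply is_derive_U, Hc | apply is_derive_cos].
Qed.

Lemma deriv_num_eq (p q t : R) : 0 < t < PI / 2 ->
  num_deriv p t = deriv_ratio p q t * den_deriv q t.
Proof.
  intros Ht. destruct (sin_cos_bounds t Ht) as (Hs & _).
  pose proof (Rpower_pos (cos t) (q - 1)).
  unfold num_deriv, den_deriv, deriv_ratio. field. lra.
Qed.

Lemma deriv_ratio_pos (p q t : R) : 0 < t < PI / 2 -> 0 < deriv_ratio p q t.
Proof.
  intros Ht. destruct (sin_cos_bounds t Ht) as (Hs & _ & _ & _ & HD & _).
  pose proof (Rpower_pos (sin t / t) (p - 1)). pose proof (Rpower_pos (cos t) (q - 1)).
  unfold deriv_ratio. apply Rdiv_lt_0_compat.
  - apply Rmult_lt_0_compat; [apply Rdiv_lt_0_compat|]; lra.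
  - apply Rmult_lt_0_compat; [apply pow_lt|]; lra.
Qed.

Lemma is_derive_deriv_ratio (p q t : R) : 0 < t < PI / 2 ->
  is_derive (deriv_ratio p q) t
    (Rpower (sin t / t) (p - 1) / Rpower (cos t) (q - 1) * Lam p q t / (t ^ 3 * sin t ^ 2 * cos t)).
Proof.
  intros Ht. destruct (sin_cos_bounds t Ht) as (Hs & Hc & _).
  unfold deriv_ratio, Rpower. auto_derive.
  - assert (0 < sin t * / t) by (apply Rmult_lt_0_compat; [|apply Rinv_0_lt_compat]; lra).
    assert (0 < t * (t * 1) * sin t) by (repeat apply Rmult_lt_0_compat; lra).
    pose proof (exp_pos ((q - 1) * ln (cos t))).
    repeat split; lra.
  - unfold Lam, Rdiv, Rminus. match goal with |- ?a = ?b => change (@eq R a b) end.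
    field. repeat split; try lra. apply Rgt_not_eq, exp_pos.
Qed.

Lemma deriv_ratio_increasing (p q : R) :
  (forall t, 0 < t < PI / 2 -> 0 < Lam p q t) ->
  forall x y, 0 < x -> x < y -> y < PI / 2 -> deriv_ratio p q x < deriv_ratio p q y.
Proof.
  intros HLam.
  apply (incr_function _ 0 (PI / 2) (fun t => Rpower (sin t / t) (p - 1) / Rpower (cos t) (q - 1)
    * Lam p q t / (t ^ 3 * sin t ^ 2 * cos t))); intros t Ht0 Ht1; simpl in Ht0, Ht1.
  - apply is_derive_deriv_ratio. lra.
  - destruct (sin_cos_bounds t ltac:(lra)) as (Hs & Hc & _).
    pose proof (HLam t ltac:(lra)).
    pose proof (Rpower_pos (sin t / t) (p - 1)). pose proof (Rpower_pos (cos t) (q - 1)).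
    apply Rdiv_lt_0_compat; [apply Rmult_lt_0_compat; [apply Rdiv_lt_0_compat|]|]; try lra.
    repeat apply Rmult_lt_0_compat; try apply pow_lt; lra.
Qed.

Lemma deriv_ratio_decreasing (p q : R) :
  (forall t, 0 < t < PI / 2 -> Lam p q t < 0) ->
  forall x y, 0 < x -> x < y -> y < PI / 2 -> deriv_ratio p q y < deriv_ratio p q x.
Proof.
  intros HLam x y Hx Hxy Hy. apply Ropp_lt_cancel.
  apply (incr_function (fun t => - deriv_ratio p q t) 0 (PI / 2) (fun t =>
    - (Rpower (sin t / t) (p - 1) / Rpower (cos t) (q - 1) * Lam p q t / (t ^ 3 * sin t ^ 2 * cos t))));
    cbn [Rbar_lt]; try lra; intros t Ht0 Ht1.
  - apply (@is_derive_opp R_AbsRing R_NormedModule), is_derive_deriv_ratio. lra.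
  - destruct (sin_cos_bounds t ltac:(lra)) as (Hs & Hc & _).
    pose proof (HLam t ltac:(lra)).
    pose proof (Rpower_pos (sin t / t) (p - 1)). pose proof (Rpower_pos (cos t) (q - 1)).
    assert (0 < t ^ 3 * sin t ^ 2 * cos t) by (repeat apply Rmult_lt_0_compat; try apply pow_lt; lra).
    assert (0 < Rpower (sin t / t) (p - 1) / Rpower (cos t) (q - 1)) by (apply Rdiv_lt_0_compat; lra).
    assert (0 < Rpower (sin t / t) (p - 1) / Rpower (cos t) (q - 1) * - Lam p q t
                / (t ^ 3 * sin t ^ 2 * cos t))
      by (apply Rdiv_lt_0_compat; [apply Rmult_lt_0_compat|]; lra).
    unfold Rdiv in *. lra.
Qed.

Lemma sinc_near_1 (t : R) : 0 < t < 1 -> 1 - t <= sin t / t < 1.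
Proof.
  intros Ht. pose proof PI2_1.
  destruct (sin_cos_bounds t ltac:(lra)) as (_ & _ & Hst & _).
  pose proof (sin_taylor_even_le 0 t ltac:(lra)) as Hsin. taylor_simpl in Hsin.
  split; apply (Rmult_lt_reg_r t) || apply (Rmult_le_reg_r t); try lra;
    unfold Rdiv; rewrite Rmult_assoc, Rinv_l by lra; nra.
Qed.

Lemma cos_near_1 (t : R) : 0 < t < 1 -> 1 - t <= cos t < 1.
Proof.
  intros Ht. pose proof PI2_1.
  destruct (sin_cos_bounds t ltac:(lra)) as (_ & _ & _ & Hc1 & _).
  pose proof (cos_taylor_even_le 0 t ltac:(lra)) as Hcos. taylor_simpl in Hcos. nra.
Qed.

Lemma T_increasing_of_Lam_pos (p q : R) :
  (forall t, 0 < t < PI / 2 -> 0 < Lam p q t) -> increasing_on_0_pi2 (T p q).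
Proof.
  intros HLam x y Hx Hxy Hy.
  apply (ratio_increasing (PI / 2) (num p) (den q) (num_deriv p) (den_deriv q) (deriv_ratio p q));
    try (intros t Ht; destruct (sin_cos_bounds t Ht) as (Hs & Hc & _ & Hc1 & _)); try assumption.
  - apply is_derive_num, Ht.
  - apply is_derive_den, Ht.
  - unfold den_deriv. pose proof (Rpower_pos (cos t) (q - 1)). nra.
  - apply U_pos. lra.
  - apply deriv_num_eq, Ht.
  - apply deriv_ratio_pos, Ht.
  - apply deriv_ratio_increasing, HLam.
  - apply small_near_0_U_comp, sinc_near_1.
Qed.

Lemma T_decreasing_of_Lam_neg (p q : R) :
  (forall t, 0 < t < PI / 2 -> Lam p q t < 0) -> decreasing_on_0_pi2 (T p q).
Proof.
  intros HLam x y Hx Hxy Hy.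
  assert (Hpos : forall t, 0 < t < PI / 2 -> 0 < num p t /\ 0 < den q t).
  { intros t Ht. destruct (sin_cos_bounds t Ht) as (Hs & Hc & Hst & Hc1 & _).
    split; apply U_pos; split; try lra.
    - apply Rdiv_lt_0_compat; lra.
    - apply (Rmult_lt_reg_r t); [lra|]. unfold Rdiv. rewrite Rmult_assoc, Rinv_l; lra. }
  assert (Hinv : den q x / num p x < den q y / num p y).
  { apply (ratio_increasing (PI / 2) (den q) (num p) (den_deriv q) (num_deriv p)
      (fun t => / deriv_ratio p q t));
      try (intros t Ht; destruct (sin_cos_bounds t Ht) as (Hs & Hc & Hst & _ & HD & _);
           pose proof (deriv_ratio_pos p q t Ht)); try assumption.
    - apply is_derive_den, Ht.
    - apply is_derive_num, Ht.
    - unfold num_deriv.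
      replace ((t * cos t - sin t) / t ^ 2 * - Rpower (sin t / t) (p - 1))
        with ((sin t - t * cos t) / t ^ 2 * Rpower (sin t / t) (p - 1)) by (field; lra).
      apply Rmult_lt_0_compat; [apply Rdiv_lt_0_compat; [|apply pow_lt]|apply Rpower_pos]; lra.
    - apply Hpos, Ht.
    - rewrite (deriv_num_eq p q t Ht). field. lra.
    - apply Rinv_0_lt_compat. assumption.
    - intros u v Hu Huv Hv.
      apply Rinv_lt_contravar; [apply Rmult_lt_0_compat; apply deriv_ratio_pos; lra|].
      apply deriv_ratio_decreasing; assumption.
    - apply small_near_0_U_comp, cos_near_1. }
  destruct (Hpos x ltac:(lra)), (Hpos y ltac:(lra)).
  unfold T. fold (num p x) (num p y) (den q x) (den q y).
  replace (num p x / den q x) with (/ (den q x / num p x)) by (field; lra).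
  replace (num p y / den q y) with (/ (den q y / num p y)) by (field; lra).
  apply Rinv_lt_contravar; [|assumption].
  apply Rmult_lt_0_compat; apply Rdiv_lt_0_compat; lra.
Qed.

Definition Lam1 (p t : R) : R :=
  let S := sin t in let C := cos t in let D := S - t * C in
  - p * D ^ 2 + t ^ 2 * S ^ 2 - S * D - 2 * t * C * D.

Lemma Lam_q1 (p t : R) : Lam p 1 t = cos t * Lam1 p t.
Proof. unfold Lam, Lam1. ring. Qed.

(* Product-to-sum identities are checked modulo [sin x ^ 2 + cos x ^ 2 = 1]. *)
Lemma eq_mod_sin2_cos2 (x a b k : R) : a - b = (sin x ^ 2 + cos x ^ 2 - 1) * k -> a = b.
Proof.
  intros Hab. pose proof (sin2_cos2 x) as H1. unfold Rsqr in H1.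
  replace (sin x ^ 2 + cos x ^ 2 - 1) with 0 in Hab by (simpl; lra). lra.
Qed.

Lemma three_cos_mul_lt (x : R) : 0 < x -> x ^ 2 <= 987 / 400 ->
  3 * cos x * (sin x - x * cos x) < x * sin x ^ 2.
Proof.
  intros Hx Hx2.
  assert (Hsum : x * sin x ^ 2 - 3 * cos x * (sin x - x * cos x)
                 = 2 * x + x * cos (2 * x) - 3 / 2 * sin (2 * x)).
  { apply (eq_mod_sin2_cos2 x _ _ (2 * x)). rewrite sin_2a, cos_2a. field. }
  assert (x * cos_taylor 6 (2 * x) <= x * cos (2 * x))
    by (apply Rmult_le_compat_l; [lra | apply (cos_taylor_even_le 2); lra]).
  assert (sin (2 * x) <= sin_taylor 7 (2 * x)) by (apply (sin_le_taylor_odd 3); lra).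
  set (l := [(-4#15); (16#315); (-4#945); (32#155925); (4#2027025)]).
  assert (Hpoly : 2 * x + x * cos_taylor 6 (2 * x) - 3 / 2 * sin_taylor 7 (2 * x)
                  = - (x ^ 5 * horner l (x ^ 2)))
    by (unfold l; taylor_simpl; cbn [horner]; unfold Q2R; cbn [Qnum Qden]; field).
  pose proof (pow_mul_horner_neg l 5 0 (987 # 400) x Hx
    ltac:(unfold Q2R; simpl; lra) ltac:(unfold Q2R; simpl; lra) ltac:(vm_compute; reflexivity)).
  lra.
Qed.

Lemma Lam1_7_5_pos (x : R) : 0 < x -> x ^ 2 <= 987 / 400 -> 0 < Lam1 (7 / 5) x.
Proof.
  intros Hx Hx2.
  assert (Hsum : Lam1 (7 / 5) x = - 6 / 5 + 4 / 5 * x ^ 2 + 6 / 5 * cos (2 * x)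
                   - 1 / 5 * (x ^ 2 * cos (2 * x)) + 9 / 10 * (x * sin (2 * x))).
  { apply (eq_mod_sin2_cos2 x _ _ (- 6 / 5 + 4 / 5 * x ^ 2)).
    unfold Lam1. rewrite sin_2a, cos_2a. field. }
  assert (cos_taylor 8 (2 * x) <= cos (2 * x)) by (apply (cos_taylor_even_le 3); lra).
  assert (x ^ 2 * cos (2 * x) <= x ^ 2 * cos_taylor 7 (2 * x))
    by (apply Rmult_le_compat_l; [nra | apply (cos_le_taylor_odd 3); lra]).
  assert (x * sin_taylor 8 (2 * x) <= x * sin (2 * x))
    by (apply Rmult_le_compat_l; [lra | apply (sin_taylor_even_le 3); lra]).
  set (l := [(-4#1575); (8#23625); (-16#779625); (32#42567525); (8#354729375)]).
  assert (Hpoly : - 6 / 5 + 4 / 5 * x ^ 2 + 6 / 5 * cos_taylor 8 (2 * x)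
                    - 1 / 5 * (x ^ 2 * cos_taylor 7 (2 * x)) + 9 / 10 * (x * sin_taylor 8 (2 * x))
                  = - (x ^ 8 * horner l (x ^ 2)))
    by (unfold l; taylor_simpl; cbn [horner]; unfold Q2R; cbn [Qnum Qden]; field).
  pose proof (pow_mul_horner_neg l 8 0 (987 # 400) x Hx
    ltac:(unfold Q2R; simpl; lra) ltac:(unfold Q2R; simpl; lra) ltac:(vm_compute; reflexivity)).
  lra.
Qed.

(* [23476089 / 16000000 = 3.1415 ^ 2 / 4 - 1], slightly below [PI ^ 2 / 4 - 1]. *)
Lemma Lam1_neg_small (x : R) : 0 < x -> x ^ 2 <= 9 / 4 -> Lam1 (23476089 / 16000000) x < 0.
Proof.
  intros Hx Hx2.
  assert (Hsum : Lam1 (23476089 / 16000000) x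
                 = - 39476089 / 32000000 + 24523911 / 32000000 * x ^ 2
                   + 39476089 / 32000000 * cos (2 * x) - 7476089 / 32000000 * (x ^ 2 * cos (2 * x))
                   + 15476089 / 16000000 * (x * sin (2 * x))).
  { apply (eq_mod_sin2_cos2 x _ _ (- 39476089 / 32000000 + 24523911 / 32000000 * x ^ 2)).
    unfold Lam1. rewrite sin_2a, cos_2a. field. }
  assert (cos (2 * x) <= cos_taylor 7 (2 * x)) by (apply (cos_le_taylor_odd 3); lra).
  assert (x ^ 2 * cos_taylor 6 (2 * x) <= x ^ 2 * cos (2 * x))
    by (apply Rmult_le_compat_l; [nra | apply (cos_taylor_even_le 2); lra]).
  assert (x * sin (2 * x) <= x * sin_taylor 7 (2 * x))
    by (apply Rmult_le_compat_l; [lra | apply (sin_le_taylor_odd 3); lra]).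
  set (l := [(-1076089#144000000); (6777541#1680000000); (-35284801#75600000000);
             (50236979#1871100000000); (15476089#12162150000000)]).
  assert (Hpoly : - 39476089 / 32000000 + 24523911 / 32000000 * x ^ 2
                    + 39476089 / 32000000 * cos_taylor 7 (2 * x)
                    - 7476089 / 32000000 * (x ^ 2 * cos_taylor 6 (2 * x))
                    + 15476089 / 16000000 * (x * sin_taylor 7 (2 * x))
                  = x ^ 6 * horner l (x ^ 2))
    by (unfold l; taylor_simpl; cbn [horner]; unfold Q2R; cbn [Qnum Qden]; field).
  pose proof (pow_mul_horner_neg l 6 7 (9 # 32) x Hx
    ltac:(unfold Q2R; simpl; lra) ltac:(simpl; unfold Q2R; simpl; lra) ltac:(vm_compute; reflexivity)).
  lra.
Qed.

Lemma Lam_46_35_neg (x : R) : 0 < x -> x ^ 2 <= 987 / 400 -> Lam (46 / 35) (34 / 35) x < 0.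
Proof.
  intros Hx Hx2.
  assert (Hsum : Lam (46 / 35) (34 / 35) x
                 = - 81 / 140 * cos x + 27 / 35 * (x ^ 2 * cos x) + 81 / 140 * cos (3 * x)
                   - 3 / 35 * (x ^ 2 * cos (3 * x)) + 27 / 70 * (x * sin x)
                   + 29 / 70 * (x * sin (3 * x))).
  { apply (eq_mod_sin2_cos2 x _ _ (- 81 / 140 * cos x + 27 / 70 * x * sin x + 27 / 35 * x ^ 2 * cos x)).
    replace (3 * x) with (2 * x + x) by ring.
    unfold Lam. rewrite sin_plus, cos_plus, sin_2a, cos_2a. field. }
  assert (cos_taylor 8 x <= cos x) by (apply (cos_taylor_even_le 3); lra).
  assert (x ^ 2 * cos x <= x ^ 2 * cos_taylor 7 x)
    by (apply Rmult_le_compat_l; [nra | apply (cos_le_taylor_odd 3); lra]).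
  assert (cos (3 * x) <= cos_taylor 7 (3 * x)) by (apply (cos_le_taylor_odd 3); lra).
  assert (x ^ 2 * cos_taylor 8 (3 * x) <= x ^ 2 * cos (3 * x))
    by (apply Rmult_le_compat_l; [nra | apply (cos_taylor_even_le 3); lra]).
  assert (x * sin x <= x * sin_taylor 7 x)
    by (apply Rmult_le_compat_l; [lra | apply (sin_le_taylor_odd 3); lra]).
  assert (x * sin (3 * x) <= x * sin_taylor 7 (3 * x))
    by (apply Rmult_le_compat_l; [lra | apply (sin_le_taylor_odd 3); lra]).
  set (l := [(-16#18375); (8#40425); (13229#1205428224); (59049#12556544000)]).
  assert (Hpoly : - 81 / 140 * cos_taylor 8 x + 27 / 35 * (x ^ 2 * cos_taylor 7 x)
                    + 81 / 140 * cos_taylor 7 (3 * x) - 3 / 35 * (x ^ 2 * cos_taylor 8 (3 * x))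
                    + 27 / 70 * (x * sin_taylor 7 x) + 29 / 70 * (x * sin_taylor 7 (3 * x))
                  = x ^ 10 * horner l (x ^ 2))
    by (unfold l; taylor_simpl; cbn [horner]; unfold Q2R; cbn [Qnum Qden]; field).
  pose proof (pow_mul_horner_neg l 10 0 (987 # 400) x Hx
    ltac:(unfold Q2R; simpl; lra) ltac:(unfold Q2R; simpl; lra) ltac:(vm_compute; reflexivity)).
  lra.
Qed.

Lemma near_pi2_poly (P u : R) :
  157075 / 100000 <= P <= 15708 / 10000 -> 0 < u <= 708 / 10000 ->
  (P * (P - u) - 1 + u ^ 2 / 2) * ((2 * P - u) - P * (P - u) * (u - u ^ 3 / 6))
  < 3 * (P - u) * (1 - u ^ 2 / 6) * (1 - u ^ 2 / 2 - (P - u) * u).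
Proof.
  intros HP Hu.
  assert (Hexpand : 3 * (P - u) * (1 - u ^ 2 / 6) * (1 - u ^ 2 / 2 - (P - u) * u)
      - (P * (P - u) - 1 + u ^ 2 / 2) * ((2 * P - u) - P * (P - u) * (u - u ^ 3 / 6))
    = (5 * P - 2 * P ^ 3) + (- 4 - P ^ 2 + P ^ 4) * u + (3 * P - 2 * P ^ 3) * u ^ 2
      + (- 1 / 2 + 13 / 6 * P ^ 2 - 1 / 6 * P ^ 4) * u ^ 3 + (- 17 / 12 * P + 1 / 3 * P ^ 3) * u ^ 4
      + (1 / 4 - 1 / 4 * P ^ 2) * u ^ 5 + 1 / 12 * P * u ^ 6) by field.
  assert ((157075 / 100000) ^ 2 <= P ^ 2 <= (15708 / 10000) ^ 2) by (split; apply pow_incr; lra).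
  assert ((157075 / 100000) ^ 3 <= P ^ 3 <= (15708 / 10000) ^ 3) by (split; apply pow_incr; lra).
  assert ((157075 / 100000) ^ 4 <= P ^ 4 <= (15708 / 10000) ^ 4) by (split; apply pow_incr; lra).
  assert (forall k, 0 <= u ^ k <= (708 / 10000) ^ k) as Hpow
    by (intros k; split; [apply pow_le | apply pow_incr]; lra).
  pose proof (Hpow 2%nat). pose proof (Hpow 3%nat). pose proof (Hpow 4%nat).
  pose proof (Hpow 5%nat). pose proof (Hpow 6%nat).
  assert (- 3801 / 10000 * u <= (- 4 - P ^ 2 + P ^ 4) * u)
    by (apply Rmult_le_compat_r; simpl in *; lra).
  assert (- 15197 / 5000 * u ^ 2 <= (3 * P - 2 * P ^ 3) * u ^ 2)
    by (apply Rmult_le_compat_r; simpl in *; lra).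
  assert (3831 / 1000 * u ^ 3 <= (- 1 / 2 + 13 / 6 * P ^ 2 - 1 / 6 * P ^ 4) * u ^ 3)
    by (apply Rmult_le_compat_r; simpl in *; lra).
  assert (- 1867 / 2000 * u ^ 4 <= (- 17 / 12 * P + 1 / 3 * P ^ 3) * u ^ 4)
    by (apply Rmult_le_compat_r; simpl in *; lra).
  assert (- 3669 / 10000 * u ^ 5 <= (1 / 4 - 1 / 4 * P ^ 2) * u ^ 5)
    by (apply Rmult_le_compat_r; simpl in *; lra).
  assert (0 <= 1 / 12 * P * u ^ 6) by (apply Rmult_le_pos; lra).
  assert (1021 / 10000 <= 5 * P - 2 * P ^ 3) by (simpl in *; lra).
  simpl in *; lra.
Qed.

(* [Lam1 (P^2 - 1)] at [t = P - u], in terms of [c = cos u = sin t] and [s = sin u = cos t]. *)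
Lemma near_pi2_algebra (P u c s : R) :
  157075 / 100000 <= P <= 15708 / 10000 -> 0 < u <= 708 / 10000 ->
  1 - u ^ 2 / 2 <= c <= 1 -> u - u ^ 3 / 6 <= s <= u ->
  let D := c - (P - u) * s in
  - (P ^ 2 - 1) * D ^ 2 + (P - u) ^ 2 * c ^ 2 - c * D - 2 * (P - u) * s * D < 0.
Proof.
  intros HP Hu Hc Hs D.
  set (A := - u * c + P * (P - u) * s).
  set (B := (2 * P - u) * c - P * (P - u) * s).
  assert (Hfactor : - (P ^ 2 - 1) * D ^ 2 + (P - u) ^ 2 * c ^ 2 - c * D - 2 * (P - u) * s * D
                    = A * B - 3 * (P - u) * s * D) by (unfold A, B, D; ring).
  assert (23 / 10 <= P * (P - u) <= 25 / 10) by nra.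
  assert (0 <= u ^ 2 <= 1 / 100) by (split; nra).
  assert (u * (1 - u ^ 2 / 2) <= u * c <= u * 1) by (split; apply Rmult_le_compat_l; lra).
  assert (P * (P - u) * (u - u ^ 3 / 6) <= P * (P - u) * s <= P * (P - u) * u)
    by (split; apply Rmult_le_compat_l; lra).
  assert ((P - u) * (u - u ^ 3 / 6) <= (P - u) * s <= (P - u) * u)
    by (split; apply Rmult_le_compat_l; lra).
  assert (u <= P * (P - u) * (u - u ^ 3 / 6)).
  { replace (u - u ^ 3 / 6) with (u * (1 - u ^ 2 / 6)) by field.
    assert (1 <= P * (P - u) * (1 - u ^ 2 / 6)) by nra. nra. }
  assert (HA : 0 <= A <= u * (P * (P - u) - 1 + u ^ 2 / 2)) by (unfold A; split; lra).
  assert (HB : 0 <= B <= (2 * P - u) - P * (P - u) * (u - u ^ 3 / 6)).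
  { assert ((2 * P - u) * (1 - u ^ 2 / 2) <= (2 * P - u) * c <= (2 * P - u) * 1)
      by (split; apply Rmult_le_compat_l; lra).
    assert (P * (P - u) * u <= (2 * P - u) * (1 - u ^ 2 / 2)) by nra.
    unfold B. split; lra. }
  assert (HD : 0 < 1 - u ^ 2 / 2 - (P - u) * u <= D) by (unfold D; split; nra).
  assert (A * B <= u * (P * (P - u) - 1 + u ^ 2 / 2) * ((2 * P - u) - P * (P - u) * (u - u ^ 3 / 6)))
    by (apply Rmult_le_compat; lra).
  assert (3 * (P - u) * (u - u ^ 3 / 6) * (1 - u ^ 2 / 2 - (P - u) * u) <= 3 * (P - u) * s * D)
    by (assert (0 <= (P - u) * (u - u ^ 3 / 6)) by (apply Rmult_le_pos; nra);
        apply Rmult_le_compat; lra).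
  pose proof (near_pi2_poly P u HP Hu).
  assert (u * ((P * (P - u) - 1 + u ^ 2 / 2) * ((2 * P - u) - P * (P - u) * (u - u ^ 3 / 6)))
          < u * (3 * (P - u) * (1 - u ^ 2 / 6) * (1 - u ^ 2 / 2 - (P - u) * u)))
    by (apply Rmult_lt_compat_l; lra).
  assert (3 * (P - u) * (u - u ^ 3 / 6) * (1 - u ^ 2 / 2 - (P - u) * u)
          = u * (3 * (P - u) * (1 - u ^ 2 / 6) * (1 - u ^ 2 / 2 - (P - u) * u))) by field.
  rewrite Hfactor. lra.
Qed.

Lemma Lam1_neg_near_pi2 (x : R) : 3 / 2 <= x < PI / 2 -> Lam1 (PI ^ 2 / 4 - 1) x < 0.
Proof.
  intros Hx. pose proof PI2_lt. pose proof PI2_gt.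
  set (u := PI / 2 - x).
  assert (Hsin : sin x = cos u) by (unfold u; rewrite cos_shift; reflexivity).
  assert (Hcos : cos x = sin u) by (unfold u; rewrite sin_shift; reflexivity).
  assert (Hcu : 1 - u ^ 2 / 2 <= cos u <= 1).
  { pose proof (cos_taylor_even_le 0 u ltac:(unfold u; lra)) as Hc. taylor_simpl in Hc.
    pose proof (COS_bound u). split; lra. }
  assert (Hsu : u - u ^ 3 / 6 <= sin u <= u).
  { pose proof (sin_taylor_even_le 0 u ltac:(unfold u; lra)) as Hs1. taylor_simpl in Hs1.
    pose proof (sin_le_taylor_odd 0 u ltac:(unfold u; lra)) as Hs2. taylor_simpl in Hs2.
    split; lra. }
  pose proof (near_pi2_algebra (PI / 2) u (cos u) (sin u) ltac:(lra) ltac:(unfold u; lra) Hcu Hsu)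
    as Halg.
  unfold Lam1. cbv zeta in *. rewrite Hsin, Hcos.
  replace x with (PI / 2 - u) by (unfold u; ring).
  replace (PI ^ 2 / 4 - 1) with ((PI / 2) ^ 2 - 1) by field.
  exact Halg.
Qed.

Lemma Lam_affine (p q p0 q0 t : R) :
  Lam p q t = Lam p0 q0 t + (p0 - p) * (cos t * (sin t - t * cos t) ^ 2)
              + (q - q0) * (t * sin t ^ 2 * (sin t - t * cos t)).
Proof. unfold Lam. ring. Qed.

Lemma Lam_shift_3q (p q p0 q0 t : R) :
  Lam p q t = Lam p0 q0 t + ((3 * q - p) - (3 * q0 - p0)) * (cos t * (sin t - t * cos t) ^ 2)
              + (q - q0) * ((sin t - t * cos t) * (t * sin t ^ 2 - 3 * cos t * (sin t - t * cos t))).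
Proof. unfold Lam. ring. Qed.

Lemma Lam1_PI_neg (t : R) : 0 < t < PI / 2 -> Lam1 (PI ^ 2 / 4 - 1) t < 0.
Proof.
  intros Ht. destruct (Rle_or_lt (3 / 2) t) as [Hbig|Hsmall]; [apply Lam1_neg_near_pi2; lra|].
  pose proof (Lam1_neg_small t ltac:(lra) ltac:(nra)).
  pose proof PI2_gt.
  assert (23476089 / 16000000 <= PI ^ 2 / 4 - 1) by nra.
  assert (0 <= (sin t - t * cos t) ^ 2) by apply pow2_ge_0.
  unfold Lam1 in *. cbv zeta in *. nra.
Qed.

Lemma Lam_pos (p q t : R) : 1 <= q -> p <= 3 * q - 8 / 5 -> 0 < t < PI / 2 -> 0 < Lam p q t.
Proof.
  intros Hq Hp Ht. destruct (sin_cos_bounds t Ht) as (Hs & Hc & _ & _ & HD & Ht2).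
  rewrite (Lam_shift_3q p q (7 / 5) 1).
  assert (0 < Lam (7 / 5) 1 t) by (rewrite Lam_q1; apply Rmult_lt_0_compat, Lam1_7_5_pos; lra).
  pose proof (three_cos_mul_lt t ltac:(lra) Ht2).
  assert (0 <= (3 * q - p - (3 * 1 - 7 / 5)) * (cos t * (sin t - t * cos t) ^ 2))
    by (apply Rmult_le_pos; [lra | apply Rmult_le_pos; [lra | apply pow2_ge_0]]).
  assert (0 <= (q - 1) * ((sin t - t * cos t) * (t * sin t ^ 2 - 3 * cos t * (sin t - t * cos t))))
    by (apply Rmult_le_pos; [|apply Rmult_le_pos]; lra).
  lra.
Qed.

Lemma Lam_neg_PI (p q t : R) : q <= 1 -> PI ^ 2 / 4 - 1 <= p -> 0 < t < PI / 2 -> Lam p q t < 0.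
Proof.
  intros Hq Hp Ht. destruct (sin_cos_bounds t Ht) as (Hs & Hc & _ & _ & HD & _).
  rewrite (Lam_affine p q (PI ^ 2 / 4 - 1) 1).
  assert (Lam (PI ^ 2 / 4 - 1) 1 t < 0)
    by (rewrite Lam_q1; pose proof (Lam1_PI_neg t Ht); nra).
  assert (0 <= (p - (PI ^ 2 / 4 - 1)) * (cos t * (sin t - t * cos t) ^ 2))
    by (apply Rmult_le_pos; [lra | apply Rmult_le_pos; [lra | apply pow2_ge_0]]).
  assert (0 <= (1 - q) * (t * sin t ^ 2 * (sin t - t * cos t)))
    by (apply Rmult_le_pos; [|apply Rmult_le_pos; [apply Rmult_le_pos; [|apply pow2_ge_0]|]]; lra).
  lra.
Qed.

Lemma Lam_neg (p q t : R) : q <= 34 / 35 -> 3 * q - 8 / 5 <= p -> 0 < t < PI / 2 -> Lam p q t < 0.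
Proof.
  intros Hq Hp Ht. destruct (sin_cos_bounds t Ht) as (Hs & Hc & _ & _ & HD & Ht2).
  rewrite (Lam_shift_3q p q (46 / 35) (34 / 35)).
  pose proof (Lam_46_35_neg t ltac:(lra) Ht2).
  pose proof (three_cos_mul_lt t ltac:(lra) Ht2).
  assert (0 <= (3 * (34 / 35) - 46 / 35 - (3 * q - p)) * (cos t * (sin t - t * cos t) ^ 2))
    by (apply Rmult_le_pos; [lra | apply Rmult_le_pos; [lra | apply pow2_ge_0]]).
  assert (0 <= (34 / 35 - q) * ((sin t - t * cos t) * (t * sin t ^ 2 - 3 * cos t * (sin t - t * cos t))))
    by (apply Rmult_le_pos; [|apply Rmult_le_pos]; lra).
  lra.
Qed.

Theorem proposition1 :
  (forall p q : R, q > 1 -> p <= 3 * q - 8 / 5 ->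
     increasing_on_0_pi2 (T p q))
  /\ (forall p : R, p <= 7 / 5 -> increasing_on_0_pi2 (T p 1))
  /\ (forall p : R, p >= PI ^ 2 / 4 - 1 -> decreasing_on_0_pi2 (T p 1))
  /\ (forall p q : R, 34 / 35 < q < 1 -> p >= PI ^ 2 / 4 - 1 ->
     decreasing_on_0_pi2 (T p q))
  /\ (forall p q : R, q <= 34 / 35 -> p >= 3 * q - 8 / 5 ->
     decreasing_on_0_pi2 (T p q)).
Proof.
  repeat split; intros p.
  - intros q Hq Hp. apply T_increasing_of_Lam_pos. intros t. apply Lam_pos; lra.
  - intros Hp. apply T_increasing_of_Lam_pos. intros t. apply Lam_pos; lra.
  - intros Hp. apply T_decreasing_of_Lam_neg. intros t. apply Lam_neg_PI; lra.
  - intros q Hq Hp. apply T_decreasing_of_Lam_neg. intros t. apply Lam_neg_PI; lra.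
  - intros q Hq Hp. apply T_decreasing_of_Lam_neg. intros t. apply Lam_neg; lra.
Qed.
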